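(* Let $q_1,q_2,v$ be indeterminates and fix integers $1\le i<j$. Then $$\big\langle q_1^{\lambda_i}q_2^{\lambda_j}\big\rangle_v=\frac{(v)_\infty}{(v)_{i-1}\,(v^iq_1)_{j-i}\,(v^jq_1q_2)_\infty}=\frac{(v)_\infty}{(vq_1q_2)_\infty}\cdot\frac{(vq_1)_{i-1}\,(vq_1q_2)_{j-1}}{(v)_{i-1}\,(vq_1)_{j-1}}.$$
   Context: Notation: $(a)_0=1$, $(a)_r=\prod_{k=0}^{r-1}(1-av^k)$ for $r\ge1$, $(a)_\infty=\prod_{k\ge0}(1-av^k)$. For a function $f$ on the set $\mathcal P$ of partitions, $\langle f\rangle_v:=(v)_\infty\sum_{\lambda\in\mathcal P}f(\lambda)v^{|\lambda|}$, as a formal power series in $v$. Here $\lambda=(\lambda_1,\lambda_2,\ldots)$ with $\lambda_k=0$ for $k$ beyond the length of $\lambda$, and $\langle q_1^{\lambda_i}q_2^{\lambda_j}\rangle_v$ denotes $\langle f\rangle_v$ for $f(\lambda)=q_1^{\lambda_i}q_2^{\lambda_j}$. *)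

(* Formal power series in v over a commutative ring R are
   represented by their coefficient sequences  nat -> R. *)
From mathcomp Require Import all_boot all_order all_algebra.
Set Implicit Arguments. Unset Strict Implicit. Unset Printing Implicit Defensive.
Import Order.TTheory GRing.Theory Num.Theory.
Local Open Scope ring_scope.

Section FPS.
Variable R : comNzRingType.

Local Notation fps := (nat -> R).

Definition fmul (f g : fps) : fps :=
  fun n => \sum_(k < n.+1) f k * g (n - k)%N.

(* multiplicative inverse of a series with constant term 1:
   g 0 = 1, g n = - sum_{k<n} f (n-k) g k   *)
Fixpoint invl (f : fps) (n : nat) : seq R :=
  match n with
  | 0 => [:: 1]
  | n'.+1 => let s := invl f n' in
             rcons s (- \sum_(k < n'.+1) f (n'.+1 - k)%N * s`_k)
  end.
Definition fps_inv (f : fps) : fps := fun n => (invl f n)`_n.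

(* finite q-Pochhammer (a)_r with a = c v^m :
   prod_{k<r} (1 - c v^(m+k)) *)
Definition pochP (c : R) (m r : nat) : {poly R} :=
  \prod_(k < r) (1 - c *: 'X^(m + k)).
Definition poch (c : R) (m r : nat) : fps := fun n => (pochP c m r)`_n.

(* infinite q-Pochhammer (a)_oo with a = c v^m, m >= 1: the coefficient of
   v^n only depends on the first n+1 factors. *)
Definition pochinf (c : R) (m : nat) : fps := fun n => (pochP c m n.+1)`_n.

(* Partitions of n are encoded as nonincreasing functions
   'I_n -> 'I_n.+1 (parts lambda_1 >= ... >= lambda_n >= 0, padded with
   zeros) with sum n; this is a bijection with the partitions of n. *)
Definition parts_seq n (f : {ffun 'I_n -> 'I_n.+1}) : seq nat :=
  [seq nat_of_ord (f x) | x <- enum 'I_n].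
Definition is_partition n (f : {ffun 'I_n -> 'I_n.+1}) : bool :=
  sorted geq (parts_seq f) && (sumn (parts_seq f) == n).
(* lambda_k (1-indexed), with lambda_k = 0 beyond the length *)
Definition lam n (f : {ffun 'I_n -> 'I_n.+1}) (k : nat) : nat :=
  nth 0%N (parts_seq f) k.-1.

Definition genser (F : (nat -> nat) -> R) : fps :=
  fun n => \sum_(f : {ffun 'I_n -> 'I_n.+1} | is_partition f) F (lam f).

(* < F >_v = (v)_oo * sum_lambda F(lambda) v^|lambda| *)
Definition bracket (F : (nat -> nat) -> R) : fps :=
  fmul (pochinf 1 1) (genser F).

End FPS.

(* Write d_l = lambda_(l+1) - lambda_(l+2) for the number of columns of height
   l+1 in the Young diagram of lambda.  Then |lambda| = sum_l (l+1) d_l and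
   lambda_m = sum_(l >= m-1) d_l, so q1^lambda_i q2^lambda_j = prod_l x_l^d_l
   with x_l = q1^[l >= i-1] q2^[l >= j-1], and lambda |-> d is a bijection onto
   the finitely supported sequences.  Hence
     sum_lambda q1^lambda_i q2^lambda_j v^|lambda| = prod_l 1 / (1 - x_l v^(l+1)),
   and the factors with x_l = 1, q1, q1 q2 make up the denominator
   (v)_(i-1) (v^i q1)_(j-i) (v^j q1 q2)_oo.  Every coefficient identity is
   checked on polynomial truncations: a partition of k has at most k rows and
   all its gaps are at most k.  The second form follows by splitting
   (v q1 q2)_oo at j-1 and (v q1)_(j-1) at i-1. *)

From mathcomp Require Import all_boot all_order all_algebra zify.
From Stdlib Require Import FunctionalExtensionality.
Set Implicit Arguments.
Unset Strict Implicit.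
Unset Printing Implicit Defensive.
Import GRing.Theory.

Lemma sum_tail_gaps (b : nat -> nat) n m :
  (forall l, b l.+1 <= b l) -> b n = 0 -> \sum_(l < n | m <= l) (b l - b l.+1) = b m.
Proof.
move=> b_nonincr bn0.
have b_le p q : p <= q -> b q <= b p.
  exact: (homo_leq (r := fun x y => y <= x) leqnn (fun _ _ _ h1 h2 => leq_trans h2 h1)).
case: (leqP m n) => [le_mn|lt_nm]; last first.
  rewrite big_pred0 => [|l]; last by rewrite leqNgt (ltn_trans (ltn_ord l) lt_nm).
  by have := b_le _ _ (ltnW lt_nm); rewrite bn0 leqn0 => /eqP.
rewrite -(big_geq_mkord m n xpredT (fun l => b l - b l.+1)).
suff -> : \sum_(m <= l < n) (b l - b l.+1) = b m - b n by rewrite bn0 subn0.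
elim: n le_mn {bn0} => [|n IHn].
  by rewrite leqn0 => /eqP->; rewrite big_geq ?subnn.
rewrite leq_eqVlt => /predU1P[->|lt_mn]; first by rewrite big_geq ?subnn.
rewrite big_nat_recr //= IHn //.
by have := b_le m n lt_mn; have := b_nonincr n; lia.
Qed.

Section PartitionGaps.
Variables k N D : nat.
Hypotheses (le_kN : k <= N) (le_kD : k <= D).
Implicit Types (f : {ffun 'I_k -> 'I_k.+1}) (d : {ffun 'I_N -> 'I_D.+1}).

Definition part f m := nth 0 (parts_seq f) m.

Definition gaps f : {ffun 'I_N -> 'I_D.+1} :=
  [ffun l : 'I_N => inord (part f l - part f l.+1)].

Definition tailsum d m := \sum_(l < N | m <= l) d l.

Definition weight d := \sum_(l < N) l.+1 * d l.

Definition of_gaps d : {ffun 'I_k -> 'I_k.+1} := [ffun m : 'I_k => inord (tailsum d m)].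

Lemma lamE f m : lam f m = part f m.-1.
Proof. by []. Qed.

Lemma part_ord f (m : 'I_k) : part f m = f m.
Proof.
rewrite /part /parts_seq (nth_map m) ?size_enum_ord //.
by congr (nat_of_ord (f _)); apply: val_inj; rewrite /= nth_enum_ord.
Qed.

Lemma part_ge f m : k <= m -> part f m = 0.
Proof. by move=> le_km; rewrite /part nth_default // size_map size_enum_ord. Qed.

Lemma part_le f m : part f m <= k.
Proof.
by case: (ltnP m k) => [lt_mk|/part_ge->//]; rewrite (part_ord f (Ordinal lt_mk)) -ltnS.
Qed.

Lemma sumn_parts_seq f : sumn (parts_seq f) = \sum_(m < N) part f m.
Proof.
rewrite sumnE big_map big_enum /= -(eq_bigr _ (fun m _ => part_ord f m)).
rewrite (big_ord_widen _ (part f) le_kN) big_mkcond /=.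
by apply: eq_bigr => m _; case: ltnP => // /part_ge->.
Qed.

Lemma sorted_parts_seqP f :
  reflect (forall m, part f m.+1 <= part f m) (sorted geq (parts_seq f)).
Proof.
apply: (iffP (sortedP 0)) => [sorted_f m|nonincr_f m _]; last exact: nonincr_f.
case: (ltnP m.+1 k) => [lt_m1k|/part_ge->//].
by apply: sorted_f; rewrite size_map size_enum_ord.
Qed.

Lemma gapsE f l : gaps f l = part f l - part f l.+1 :> nat.
Proof.
by rewrite ffunE inordK // ltnS (leq_trans (leq_subr _ _)) // (leq_trans (part_le _ _)).
Qed.

Lemma weight_tailsum d : weight d = \sum_(m < N) tailsum d m.
Proof.
rewrite /tailsum (exchange_big_dep xpredT) //=; apply: eq_bigr => l _.
by rewrite -(big_ord_widen _ (fun=> nat_of_ord (d l)) (ltn_ord l)) sum_nat_const card_ord.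
Qed.

Lemma tailsum_gaps f m :
  (forall l, part f l.+1 <= part f l) -> tailsum (gaps f) m = part f m.
Proof.
move=> nonincr_f; rewrite /tailsum (eq_bigr _ (fun l _ => gapsE f l)).
exact: sum_tail_gaps (part_ge f le_kN).
Qed.

Lemma weight_gaps f :
  (forall l, part f l.+1 <= part f l) -> weight (gaps f) = sumn (parts_seq f).
Proof.
move=> nonincr_f; rewrite weight_tailsum sumn_parts_seq.
by apply: eq_bigr => m _; rewrite tailsum_gaps.
Qed.

Lemma tailsumS d (l : 'I_N) : tailsum d l = d l + tailsum d l.+1.
Proof.
rewrite /tailsum (bigD1 l) //=; congr (_ + _).
by apply: eq_bigl => m; rewrite ltn_neqAle andbC eq_sym.
Qed.

Lemma tailsum_nonincr d m : tailsum d m.+1 <= tailsum d m.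
Proof. by apply: sub_le_big => [|x y|l /ltnW] //; exact: leq_addr. Qed.

Lemma tailsum_le_weight d m : tailsum d m <= weight d.
Proof.
rewrite /weight (bigID (fun l : 'I_N => m <= l)) /= -[tailsum d m]addn0 leq_add //.
by apply: leq_sum => l _; rewrite leq_pmull.
Qed.

Lemma tailsum_eq0 d m : weight d = k -> k <= m -> tailsum d m = 0.
Proof.
move=> wd le_km; apply: big1 => l le_ml; apply/eqP; rewrite -leqn0.
have : l.+1 * d l <= k by rewrite -wd /weight (bigD1 l) //= leq_addr.
by case: (nat_of_ord (d l)) => // x; rewrite mulnS; lia.
Qed.

Lemma part_of_gaps d m : weight d = k -> part (of_gaps d) m = tailsum d m.
Proof.
move=> wd; case: (ltnP m k) => [lt_mk|le_km]; last by rewrite part_ge ?tailsum_eq0.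
rewrite (part_ord _ (Ordinal lt_mk)) ffunE inordK // ltnS.
by rewrite (leq_trans (tailsum_le_weight _ _)) ?wd.
Qed.

Lemma gaps_of_gaps d : weight d = k -> gaps (of_gaps d) = d.
Proof.
move=> wd; apply/ffunP => l; apply: val_inj => /=.
by rewrite gapsE !(part_of_gaps _ wd) tailsumS addnK.
Qed.

Lemma of_gaps_gaps f : is_partition f -> of_gaps (gaps f) = f.
Proof.
case/andP=> /sorted_parts_seqP nonincr_f _; apply/ffunP => m; apply: val_inj => /=.
by rewrite ffunE tailsum_gaps // inordK ?part_ord // ltnS part_le.
Qed.

Lemma is_partition_of_gaps d :
  is_partition (of_gaps d) && (gaps (of_gaps d) == d) = (weight d == k).
Proof.
apply/andP/eqP => [[/andP[/sorted_parts_seqP nonincr /eqP sum_k] /eqP gaps_d]|wd].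
  by rewrite -gaps_d weight_gaps.
have nonincr m : part (of_gaps d) m.+1 <= part (of_gaps d) m.
  by rewrite !part_of_gaps // tailsum_nonincr.
split; last by rewrite gaps_of_gaps.
rewrite /is_partition (introT (sorted_parts_seqP _) nonincr) /=.
by rewrite -weight_gaps // gaps_of_gaps // wd.
Qed.

Lemma sum_partitions (V : nmodType) (G : {ffun 'I_k -> 'I_k.+1} -> V) :
  (\sum_(f | is_partition f) G f =
   \sum_(d : {ffun 'I_N -> 'I_D.+1} | weight d == k) G (of_gaps d))%R.
Proof.
rewrite (reindex_onto of_gaps gaps) => [|f]; last exact: of_gaps_gaps.
by apply: eq_bigl => d; rewrite is_partition_of_gaps.
Qed.

End PartitionGaps.

Local Open Scope ring_scope.

Section PowerSeries.
Variable R : comNzRingType.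
Local Notation fps := (nat -> R).
Implicit Types (f g h : fps) (p q : {poly R}).

Definition fps1 : fps := fun n => (n == 0)%:R.

Definition fps_trunc f n : {poly R} := \poly_(m < n.+1) f m.

Lemma coef_fps_trunc f n m : (m <= n)%N -> (fps_trunc f n)`_m = f m.
Proof. by move=> le_mn; rewrite coef_poly ltnS le_mn. Qed.

Lemma fmul_coef_poly f g p q n :
  (forall m, (m <= n)%N -> f m = p`_m) ->
  (forall m, (m <= n)%N -> g m = q`_m) -> fmul f g n = (p * q)`_n.
Proof.
move=> eq_fp eq_gq; rewrite coefM; apply: eq_bigr => -[m /= lt_mn] _.
by rewrite eq_fp ?eq_gq ?leq_subr // -ltnS.
Qed.

Lemma fmul_trunc f g n m :
  (m <= n)%N -> fmul f g m = (fps_trunc f n * fps_trunc g n)`_m.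
Proof.
by move=> le_mn; apply: fmul_coef_poly => k le_km;
  rewrite coef_fps_trunc // (leq_trans le_km).
Qed.

Lemma fmul_coef0 f g : fmul f g 0 = f 0%N * g 0%N.
Proof. by rewrite /fmul big_ord1. Qed.

Lemma fmulC f g : fmul f g = fmul g f.
Proof.
by apply: functional_extensionality => n; rewrite !(fmul_trunc _ _ (leqnn n)) mulrC.
Qed.

Lemma fmulA f g h : fmul f (fmul g h) = fmul (fmul f g) h.
Proof.
apply: functional_extensionality => n.
rewrite (fmul_coef_poly (p := fps_trunc f n) (q := fps_trunc g n * fps_trunc h n)).
- rewrite (fmul_coef_poly (p := fps_trunc f n * fps_trunc g n) (q := fps_trunc h n))
    ?mulrA //.
  + by move=> m le_mn; apply: fmul_trunc.
  + by move=> m le_mn; rewrite coef_fps_trunc.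
- by move=> m le_mn; rewrite coef_fps_trunc.
- by move=> m le_mn; apply: fmul_trunc.
Qed.

Lemma fmulCA f g h : fmul f (fmul g h) = fmul g (fmul f h).
Proof. by rewrite fmulA (fmulC f g) -fmulA. Qed.

Lemma fmul1f f : fmul fps1 f = f.
Proof.
apply: functional_extensionality => n.
rewrite (fmul_coef_poly (p := 1) (q := fps_trunc f n)) ?mul1r ?coef_fps_trunc //.
  by move=> m _; rewrite coef1.
by move=> m le_mn; rewrite coef_fps_trunc.
Qed.

Lemma size_invl f n : size (invl f n) = n.+1.
Proof. by elim: n => //= n IHn; rewrite size_rcons IHn. Qed.

Lemma nth_invl f n m k : (k <= n)%N -> (n <= m)%N -> (invl f m)`_k = (invl f n)`_k.
Proof.
move=> le_kn; elim: m => [|m IHm]; first by rewrite leqn0 => /eqP->.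
rewrite leq_eqVlt => /predU1P[-> //|]; rewrite ltnS => le_nm.
by rewrite /= nth_rcons size_invl ltnS (leq_trans le_kn le_nm) IHm.
Qed.

Lemma fps_invS f n :
  fps_inv f n.+1 = - \sum_(k < n.+1) f (n.+1 - k)%N * fps_inv f k.
Proof.
rewrite /fps_inv /= nth_rcons size_invl ltnn eqxx; congr (- _).
by apply: eq_bigr => -[k lt_kn] _; rewrite (@nth_invl f k n) // -ltnS.
Qed.

Lemma fmulfV f : f 0%N = 1 -> fmul f (fps_inv f) = fps1.
Proof.
move=> f0; apply: functional_extensionality => -[|n].
  by rewrite fmul_coef0 f0 mul1r.
rewrite fmulC /fmul big_ord_recr /= subnn f0 mulr1 fps_invS.
by under eq_bigr do rewrite mulrC; rewrite subrr.
Qed.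

Lemma fmulKf f : f 0%N = 1 -> cancel (fmul f) (fmul (fps_inv f)).
Proof. by move=> f0 g; rewrite fmulA (fmulC _ f) fmulfV // fmul1f. Qed.

Lemma fmulKVf f : f 0%N = 1 -> cancel (fmul (fps_inv f)) (fmul f).
Proof. by move=> f0 g; rewrite fmulA fmulfV // fmul1f. Qed.

Lemma fps_inv_eq f g : f 0%N = 1 -> fmul f g = fps1 -> fps_inv f = g.
Proof.
move=> f0 fg1; rewrite -(fmulKf f0 g) fg1.
by rewrite fmulC fmul1f.
Qed.

Lemma fps_invM f g : f 0%N = 1 -> g 0%N = 1 ->
  fps_inv (fmul f g) = fmul (fps_inv f) (fps_inv g).
Proof.
move=> f0 g0; apply: fps_inv_eq; first by rewrite fmul_coef0 f0 g0 mulr1.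
by rewrite -fmulA (fmulCA g) (fmulfV g0) fmulA (fmulfV f0) fmul1f.
Qed.

End PowerSeries.

Section Pochhammer.
Variable R : comNzRingType.
Implicit Types (c : R) (p : {poly R}).

Lemma coefM_prod_1subX p (I : Type) (r : seq I) (a : I -> R) (s : I -> nat) m :
  (forall x, (m < s x)%N) ->
  (p * \prod_(x <- r) (1 - a x *: 'X^(s x)))`_m = p`_m.
Proof.
move=> lt_ms; elim: r => [|x r IHr]; first by rewrite big_nil mulr1.
rewrite big_cons mulrCA mulrBl mul1r coefB -scalerAl coefZ (mulrC 'X^_) coefMXn.
by rewrite lt_ms mulr0 subr0.
Qed.

Lemma pochP_split c s a b :
  pochP c s (a + b) = pochP c s a * pochP c (s + a) b.
Proof.
rewrite /pochP big_split_ord; congr (_ * _).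
by apply: eq_bigr => k _; rewrite addnA.
Qed.

Lemma coef_pochP_stable c s r r' m : (r <= r')%N -> (m < s + r)%N ->
  (pochP c s r')`_m = (pochP c s r)`_m.
Proof.
move=> le_rr' lt_m; rewrite -(subnKC le_rr') pochP_split /pochP.
by apply: coefM_prod_1subX => k; rewrite (leq_trans lt_m) ?leq_addr.
Qed.

Lemma coef0_pochP c s r : (0 < s)%N -> (pochP c s r)`_0 = 1.
Proof.
move=> s_gt0; rewrite -[pochP c s r]mul1r /pochP coefM_prod_1subX ?coef1 //.
by move=> k; rewrite (leq_trans s_gt0) ?leq_addr.
Qed.

Lemma pochinfE c s n N : (n < N)%N -> pochinf c s n = (pochP c s N)`_n.
Proof.
by move=> lt_nN; rewrite /pochinf (coef_pochP_stable _ lt_nN) // addnS ltnS leq_addl.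
Qed.

Lemma poch_coef0 c s r : (0 < s)%N -> poch c s r 0%N = 1.
Proof. exact: coef0_pochP. Qed.

Lemma pochinf_coef0 c s : (0 < s)%N -> pochinf c s 0%N = 1.
Proof. exact: coef0_pochP. Qed.

Lemma poch_split c s a b : poch c s (a + b) = fmul (poch c s a) (poch c (s + a) b).
Proof.
apply: functional_extensionality => n.
by rewrite (fmul_coef_poly (p := pochP c s a) (q := pochP c (s + a) b)) -?pochP_split.
Qed.

Lemma pochinf_split c s r : pochinf c s = fmul (poch c s r) (pochinf c (s + r)).
Proof.
apply: functional_extensionality => n.
rewrite (pochinfE _ _ (ltn_addl r (ltnSn n))) pochP_split.
symmetry; apply: fmul_coef_poly => // m le_mn.
by rewrite (pochinfE _ _ (leq_ltn_trans le_mn (ltnSn n))).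
Qed.

End Pochhammer.

Section ColumnProducts.
Variable R : comNzRingType.
Implicit Types c : nat -> R.

Lemma coef_prod_geometric c N D n :
  (\prod_(l < N) \sum_(e < D.+1) (c l *: 'X^(l.+1)) ^+ e)`_n =
  \sum_(d : {ffun 'I_N -> 'I_D.+1} | weight d == n) \prod_(l < N) c l ^+ d l.
Proof.
rewrite bigA_distr_bigA /= coef_sum [RHS]big_mkcond; apply: eq_bigr => d _.
under eq_bigr do rewrite exprZn -exprM.
rewrite scaler_prod prodrXr coefZ coefXn /weight eq_sym.
by case: eqP; rewrite ?mulr1 ?mulr0.
Qed.

Lemma coef_prod_1subX_geometric c N n :
  (\prod_(l < N) (1 - c l *: 'X^(l.+1)) *
   \prod_(l < N) \sum_(e < n.+1) (c l *: 'X^(l.+1)) ^+ e)`_n = (n == 0)%:R.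
Proof.
rewrite -big_split /=.
under eq_bigr do rewrite -opprB mulNr -subrX1 opprB exprZn -exprM.
rewrite -[\prod_(l < N) _]mul1r coefM_prod_1subX ?coef1 // => l.
by rewrite mulSn ltn_addr.
Qed.

End ColumnProducts.

Section Bracket.
Variables (R : comNzRingType) (q1 q2 : R) (i j : nat).
Hypotheses (i_gt0 : (0 < i)%N) (lt_ij : (i < j)%N).

Definition column_weight l : R := q1 ^+ (i.-1 <= l)%N * q2 ^+ (j.-1 <= l)%N.

Definition qstat (lam : nat -> nat) : R := q1 ^+ lam i * q2 ^+ lam j.

Definition qstat_denom : nat -> R :=
  fmul (poch 1 1 i.-1) (fmul (poch q1 i (j - i)) (pochinf (q1 * q2) j)).

Lemma coef_genser_qstat n N D : (n <= N)%N -> (n <= D)%N ->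
  genser qstat n =
  (\prod_(l < N) \sum_(e < D.+1) (column_weight l *: 'X^(l.+1)) ^+ e)`_n.
Proof.
move=> le_nN le_nD; rewrite coef_prod_geometric /genser (sum_partitions le_nN le_nD).
apply: eq_bigr => d /eqP wd; rewrite /qstat !lamE !(part_of_gaps le_nN le_nD _ wd).
rewrite /column_weight; under eq_bigr do rewrite exprMn -!exprM.
rewrite big_split /= !prodrXr /tailsum.
by congr (_ ^+ _ * _ ^+ _); rewrite big_mkcond;
  apply: eq_bigr => l _; case: leqP; rewrite ?mul1n.
Qed.

Lemma prod_1sub_column_weight L :
  \prod_(l < i.-1 + (j - i + L)) (1 - column_weight l *: 'X^(l.+1)) =
  pochP 1 1 i.-1 * (pochP q1 i (j - i) * pochP (q1 * q2) j L).
Proof.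
rewrite !big_split_ord /pochP; congr (_ * (_ * _)); apply: eq_bigr => l _ /=.
all: have := ltn_ord l; rewrite /column_weight => lt_l.
- have [-> ->] : (i.-1 <= l)%N = false /\ (j.-1 <= l)%N = false by split; lia.
  by rewrite mulr1 add1n.
- have [-> ->] : (i.-1 <= i.-1 + l)%N /\ (j.-1 <= i.-1 + l)%N = false by split; lia.
  by rewrite mulr1; congr (1 - _ *: 'X^_); lia.
- have [-> ->] : (i.-1 <= i.-1 + (j - i + l))%N /\ (j.-1 <= i.-1 + (j - i + l))%N.
    by split; lia.
  by congr (1 - _ *: 'X^_); lia.
Qed.

Lemma qstat_denom_coef m L : (m < L)%N ->
  qstat_denom m =
  (\prod_(l < i.-1 + (j - i + L)) (1 - column_weight l *: 'X^(l.+1)))`_m.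
Proof.
move=> lt_mL; rewrite prod_1sub_column_weight.
apply: fmul_coef_poly => // m1 le_m1m; apply: fmul_coef_poly => // m2 le_m2m1.
by apply: pochinfE; rewrite (leq_ltn_trans (leq_trans le_m2m1 le_m1m)).
Qed.

Lemma qstat_denom_coef0 : qstat_denom 0 = 1.
Proof.
have j_gt0 : (0 < j)%N by apply: leq_ltn_trans lt_ij.
by rewrite /qstat_denom !fmul_coef0 !poch_coef0 ?pochinf_coef0 ?mulr1.
Qed.

Lemma fmul_qstat_denom_genser : fmul qstat_denom (genser qstat) = fps1 R.
Proof.
apply: functional_extensionality => n; pose N := (i.-1 + (j - i + n.+1))%N.
rewrite (fmul_coef_poly (p := \prod_(l < N) (1 - column_weight l *: 'X^(l.+1)))
  (q := \prod_(l < N) \sum_(e < n.+1) (column_weight l *: 'X^(l.+1)) ^+ e)).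
- exact: coef_prod_1subX_geometric.
- by move=> m le_mn; apply: qstat_denom_coef.
- by move=> m le_mn; apply: coef_genser_qstat => //; rewrite /N; lia.
Qed.

Lemma genser_qstat_inv : genser qstat = fps_inv qstat_denom.
Proof.
by apply/esym/fps_inv_eq; [exact: qstat_denom_coef0 | exact: fmul_qstat_denom_genser].
Qed.

Lemma inv_qstat_denomE :
  fps_inv qstat_denom =
  fmul (fps_inv (pochinf (q1 * q2) 1))
       (fmul (fmul (poch q1 1 i.-1) (poch (q1 * q2) 1 j.-1))
             (fps_inv (fmul (poch 1 1 i.-1) (poch q1 1 j.-1)))).
Proof.
have j_gt0 : (0 < j)%N by apply: leq_ltn_trans lt_ij.
have -> : pochinf (q1 * q2) 1 = fmul (poch (q1 * q2) 1 j.-1) (pochinf (q1 * q2) j).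
  by rewrite (pochinf_split _ _ j.-1) add1n prednK.
have -> : poch q1 1 j.-1 = fmul (poch q1 1 i.-1) (poch q1 i (j - i)).
  have -> : j.-1 = (i.-1 + (j - i))%N by lia.
  by rewrite poch_split add1n (prednK i_gt0).
rewrite /qstat_denom !fps_invM ?fmul_coef0 ?poch_coef0 ?pochinf_coef0 ?mulr1 //.
rewrite -!fmulA (fmulCA (poch q1 1 i.-1)) (fmulCA (fps_inv _) (poch (q1 * q2) 1 j.-1)).
rewrite fmulKf ?poch_coef0 //.
rewrite (fmulCA (fps_inv (poch 1 1 i.-1)) (fps_inv (poch q1 1 i.-1))).
by rewrite fmulKVf ?poch_coef0 // [RHS]fmulC -fmulA.
Qed.

End Bracket.

Theorem lemma3p4 (R : comNzRingType) (q1 q2 : R) (i j : nat) :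
  (1 <= i)%N -> (i < j)%N ->
  (forall n : nat,
     bracket (fun lam => q1 ^+ lam i * q2 ^+ lam j) n =
     fmul (pochinf 1 1)
          (fps_inv (fmul (poch 1 1 i.-1)
                      (fmul (poch q1 i (j - i)) (pochinf (q1 * q2) j)))) n)
  /\
  (forall n : nat,
     bracket (fun lam => q1 ^+ lam i * q2 ^+ lam j) n =
     fmul (fmul (pochinf 1 1) (fps_inv (pochinf (q1 * q2) 1)))
          (fmul (fmul (poch q1 1 i.-1) (poch (q1 * q2) 1 j.-1))
                (fps_inv (fmul (poch 1 1 i.-1) (poch q1 1 j.-1)))) n).
Proof.
move=> i_gt0 lt_ij; rewrite /bracket genser_qstat_inv //.
by split=> n //; rewrite inv_qstat_denomE // fmulA.
Qed.
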